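(* Let $G$ be a finite abelian group, let $S\subseteq G$ be spectral, and let $H\le G$ be a subgroup such that $S$ determines every direction in $H$, i.e. for every nonzero $h\in H$ there is $w\in S-S$ with $w\sim h$. Then $|H|$ divides $|S|$.
   Context: For a finite abelian group $G=\bigoplus_i\mathbb{Z}_{n_i}$ with exponent $M$, let $\langle x,y\rangle=\sum_i\frac{M}{n_i}x_iy_i\in\mathbb{Z}_M$ and $\chi_g(x)=e^{2\pi i\langle x,g\rangle/M}$ for $g\in G$; $g\mapsto\chi_g$ identifies $G$ with its dual group. For a set $S$, $\chi(S)=\sum_{s\in S}\chi(s)$. A set $S\subseteq G$ is spectral if there is $\Lambda\subseteq G$ with $|\Lambda|=|S|$ and $\chi_{\lambda-\lambda'}(S)=0$ for all distinct $\lambda,\lambda'\in\Lambda$. For $v,w\in G$ write $v\sim w$ if $v$ and $w$ generate the same cyclic subgroup of $G$; the equivalence classes are called directions, and $S$ determines the direction of $v$ if some $w\in S-S$ satisfies $w\sim v$. *)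

From mathcomp Require Import all_boot all_order all_algebra all_field.
Set Implicit Arguments. Unset Strict Implicit. Unset Printing Implicit Defensive.
Import Order.TTheory GRing.Theory Num.Theory.
Local Open Scope ring_scope.

(* The group G = (+)_{i<k} Z_{m_i} with moduli m_i = (d i).+1 >= 1
   (every positive modulus is allowed; Z_1 is the trivial factor). *)
Definition grp (k : nat) (d : 'I_k -> nat) : finType :=
  {dffun forall i : 'I_k, 'I_(d i).+1}.

Section Grp.
Variables (k : nat) (d : 'I_k -> nat).
Local Notation G := (grp d).

Definition modulus (i : 'I_k) : nat := (d i).+1.

Definition gzero : G := [ffun i => (0 : 'I_(d i).+1)].
Definition gsub (x y : G) : G := [ffun i => (x i - y i : 'I_(d i).+1)].
Definition gmul (v : G) (m : nat) : G := [ffun i => (v i *+ m : 'I_(d i).+1)].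

Definition expo : nat := \big[lcmn/1%N]_(i < k) modulus i.

(* <x,g> = sum_i (M/n_i) x_i g_i  (taken as a natural number; only its
   class mod M matters, since the character value is omega^<x,g> with
   omega^M = 1) *)
Definition pairing (x g : G) : nat :=
  (\sum_(i < k) (expo %/ modulus i) * (x i : nat) * (g i : nat))%N.

(* omega = e^{2 pi i / M} in algC: M.-root (-1) is e^{i pi / M}. *)
Definition omega : algC := (expo.-root (-1)) ^+ 2.

Definition chi (g : G) (x : G) : algC := omega ^+ pairing x g.

Definition chi_sum (g : G) (S : {set G}) : algC := \sum_(s in S) chi g s.

Definition spectral (S : {set G}) : Prop :=
  exists Lam : {set G}, #|Lam| = #|S| /\
    forall l l', l \in Lam -> l' \in Lam -> l != l' ->
      chi_sum (gsub l l') S = 0.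

Definition diffset (S : {set G}) : {set G} :=
  [set gsub x y | x in S, y in S].

Definition same_dir (v w : G) : Prop :=
  forall x : G, (exists m, x = gmul v m) <-> (exists m, x = gmul w m).

Definition subgroup (H : {set G}) : Prop :=
  gzero \in H /\ forall x y, x \in H -> y \in H -> gsub x y \in H.

End Grp.

From mathcomp Require Import all_boot all_order all_algebra all_field.
Set Implicit Arguments. Unset Strict Implicit. Unset Printing Implicit Defensive.
Import Order.TTheory GRing.Theory Num.Theory.
Local Open Scope ring_scope.

(* Let Λ be a spectrum of S. Since |Λ| = |S| and the rows (χ_λ(s))_s are
   orthogonal, so are the columns: Σ_{λ∈Λ} χ_{s-t}(λ) = 0 for s ≠ t in S.
   If h ∈ H is nonzero, h = m(s-t) for some s ≠ t in S, with m prime to the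
   order of s-t, so Σ_λ χ_h(λ) is the image of the previous sum under a
   Galois automorphism of Q(ω) and vanishes too.  Summing over h ∈ H gives
   |Λ| = Σ_{λ∈Λ} Σ_{h∈H} χ_λ(h) = |H| · #{λ ∈ Λ | χ_λ is trivial on H}. *)

Lemma sum_norm1_mul_conj (T : finType) (A : {set T}) (b : T -> algC) :
  (forall x, `|b x| = 1) -> \sum_(x in A) b x * (b x)^* = #|A|%:R.
Proof.
move=> norm_b; rewrite (eq_bigr (fun _ => 1)) ?sumr_const // => x _.
by rewrite -normCK norm_b expr1n.
Qed.

Section GramIdentity.
Variables (I J : finType) (L : {set I}) (S : {set J}) (a : I -> J -> algC).

Let row_dot l l' := \sum_(s in S) a l s * (a l' s)^*.
Let col_dot s t := \sum_(l in L) a l s * (a l t)^*.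

(* Both sides expand to Σ_{l,l',s,t} a l s (a l' s)^* (a l t)^* a l' t. *)
Lemma sum_norm_row_dot_col_dot :
  \sum_(l in L) \sum_(l' in L) `|row_dot l l'| ^+ 2 =
  \sum_(s in S) \sum_(t in S) `|col_dot s t| ^+ 2.
Proof.
pose f l l' s t := a l s * (a l' s)^* * ((a l t)^* * a l' t).
have row_expand l l' : `|row_dot l l'| ^+ 2 = \sum_(s in S) \sum_(t in S) f l l' s t.
  rewrite normCK /row_dot rmorph_sum /= big_distrlr /=; apply: eq_bigr => s _.
  by apply: eq_bigr => t _; rewrite /f rmorphM /= conjCK.
have col_expand s t : `|col_dot s t| ^+ 2 = \sum_(l in L) \sum_(l' in L) f l l' s t.
  rewrite normCK /col_dot rmorph_sum /= big_distrlr /=; apply: eq_bigr => l _.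
  by apply: eq_bigr => l' _; rewrite /f rmorphM /= conjCK mulrACA.
under eq_bigr do under eq_bigr do rewrite row_expand.
under [RHS]eq_bigr do under eq_bigr do rewrite col_expand.
under eq_bigr do rewrite exchange_big.
rewrite exchange_big.
under eq_bigr do under eq_bigr do rewrite exchange_big.
by under eq_bigr do rewrite exchange_big.
Qed.

Hypothesis cardLS : #|L| = #|S|.
Hypothesis norm_a : forall l s, `|a l s| = 1.
Hypothesis row_orth :
  forall l l', l \in L -> l' \in L -> l != l' -> row_dot l l' = 0.

Lemma col_orth s t : s \in S -> t \in S -> s != t -> col_dot s t = 0.
Proof.
have rows_total : \sum_(l in L) \sum_(l' in L) `|row_dot l l'| ^+ 2 = #|S|%:R ^+ 3.
  rewrite (eq_bigr (fun _ => #|S|%:R ^+ 2)).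
    by rewrite sumr_const cardLS [RHS]exprSr mulr_natr.
  move=> l lL; rewrite (bigD1 l) //= big1 ?addr0.
    by rewrite /row_dot sum_norm1_mul_conj // normr_nat.
  by move=> l' /andP[l'L ne]; rewrite row_orth ?normr0 ?expr0n // eq_sym.
(* On the right, the diagonal terms alone already contribute |S|^3. *)
have off_diag : \sum_(s in S) \sum_(t in S | t != s) `|col_dot s t| ^+ 2 = 0.
  move: sum_norm_row_dot_col_dot; rewrite rows_total.
  under [RHS]eq_bigr => x xS.
    by rewrite (bigD1 x xS) /= /col_dot sum_norm1_mul_conj //; over.
  rewrite big_split /= sumr_const cardLS normr_nat.
  rewrite -[_ ^+ 2 *+ _]mulr_natr -exprSr.
  by rewrite -[X in X = _]addr0 => /addrI <-.
move=> sS tS st.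
have norm2_ge0 (x : algC) : 0 <= `|x| ^+ 2 by rewrite exprn_ge0.
have := psumr_eq0P (fun x _ => sumr_ge0 _ (fun y _ => norm2_ge0 _)) off_diag sS.
move=> /(psumr_eq0P (fun y _ => norm2_ge0 _)) /(_ t).
by rewrite tS eq_sym st => /(_ isT) /eqP; rewrite sqrf_eq0 normr_eq0 => /eqP.
Qed.

End GramIdentity.

Lemma eqn_mod_divn_mul N n a b : (n %| N)%N -> (a = b %[mod n])%N ->
  (N %/ n * a = N %/ n * b %[mod N])%N.
Proof.
move=> nN ab; have reduce x : (N %/ n * x = N %/ n * (x %% n) %[mod N])%N.
  by rewrite muln_modr divnK // modn_mod.
by rewrite reduce ab -reduce.
Qed.

Lemma val_subrK_mod n (x y : 'I_n.+1) : ((x - y)%R + y = x %[mod n.+1])%N.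
Proof. by have /= {2}<- := congr1 val (subrK y x); rewrite modn_mod. Qed.

Lemma norm_unity_root (R : numDomainType) (z : R) n :
  (0 < n)%N -> z ^+ n = 1 -> `|z| = 1.
Proof.
move=> n_gt0 zn; apply/eqP; rewrite -(pexpr_eq1 n_gt0) ?normr_ge0 //.
by rewrite -normrX zn normr1.
Qed.

Section GroupArithmetic.
Variables (k : nat) (d : 'I_k -> nat).
Local Notation G := (grp d).

Lemma gsubIr (y : G) : injective (fun x : G => gsub x y).
Proof.
move=> x x' /ffunP eq_xx'; apply/ffunP => i.
by have := eq_xx' i; rewrite !ffunE => /subIr.
Qed.

Lemma gsubxx (x : G) : gsub x x = gzero d.
Proof. by apply/ffunP => i; rewrite !ffunE subrr. Qed.

Lemma gmul1 (x : G) : gmul x 1 = x.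
Proof. by apply/ffunP => i; rewrite !ffunE mulr1n. Qed.

Lemma gmul0 (x : G) : gmul x 0 = gzero d.
Proof. by apply/ffunP => i; rewrite !ffunE mulr0n. Qed.

Lemma gmul0v m : gmul (gzero d) m = gzero d.
Proof. by apply/ffunP => i; rewrite !ffunE mul0rn. Qed.

Lemma gmulA (x : G) a b : gmul (gmul x a) b = gmul x (a * b).
Proof. by apply/ffunP => i; rewrite !ffunE mulrnA. Qed.

Lemma gmulS_fix (x : G) e : gmul x e.+1 = x -> gmul x e = gzero d.
Proof.
move/ffunP => fix_x; apply/ffunP => i; have := fix_x i; rewrite !ffunE mulrSr.
by rewrite -[in RHS](add0r (x i)) => /addIr.
Qed.

Lemma same_dir_gzero (h : G) : same_dir (gzero d) h -> h = gzero d.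
Proof.
move=> zh; have [m ->] : exists m, h = gmul (gzero d) m.
  by apply/(zh h).2; exists 1%N; rewrite gmul1.
exact: gmul0v.
Qed.

End GroupArithmetic.

Section Characters.
Variables (k : nat) (d : 'I_k -> nat).
Local Notation G := (grp d).
Local Notation M := (expo d).
Local Notation omega := (omega d).

Lemma expo_gt0 : (0 < M)%N.
Proof. by rewrite /expo; elim/big_ind: _ => // p q; rewrite lcmn_gt0 => -> ->. Qed.

Lemma omega_expo : omega ^+ M = 1.
Proof. by rewrite /omega -exprM mulnC exprM rootCK ?expo_gt0 // sqrrN expr1n. Qed.

Lemma omega_eqmod a b : (a = b %[mod M])%N -> omega ^+ a = omega ^+ b.
Proof.
move=> ab; rewrite (divn_eq a M) (divn_eq b M) ab !exprD.
by rewrite ![(_ * M)%N]mulnC !exprM omega_expo !expr1n.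
Qed.

Lemma pairingC (x y : G) : pairing x y = pairing y x.
Proof. by apply: eq_bigr => i _; rewrite mulnAC. Qed.

Lemma pairing_gzero (s : G) : pairing s (gzero d) = 0%N.
Proof. by rewrite /pairing big1 // => i _; rewrite ffunE muln0. Qed.

Lemma pairing_gsub (s x y : G) :
  (pairing s (gsub x y) + pairing s y = pairing s x %[mod M])%N.
Proof.
rewrite /pairing -big_split /= -[LHS]modn_summ -[RHS]modn_summ; congr (_ %% _)%N.
apply: eq_bigr => i _; rewrite ffunE -mulnDr -!mulnA.
apply/eqn_mod_divn_mul; first exact: biglcmn_sup.
by rewrite -modnMmr val_subrK_mod modnMmr.
Qed.

Lemma pairing_gmul (s v : G) m :
  (pairing s (gmul v m) = pairing s v * m %[mod M])%N.
Proof.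
rewrite /pairing big_distrl /= -[LHS]modn_summ -[RHS]modn_summ; congr (_ %% _)%N.
apply: eq_bigr => i _; rewrite ffunE -!mulnA.
apply/eqn_mod_divn_mul; first exact: biglcmn_sup.
by rewrite Zp_mulrn modnMmr mulnA.
Qed.

Lemma chiC (g x : G) : chi g x = chi x g.
Proof. by rewrite /chi pairingC. Qed.

Lemma norm_chi (g x : G) : `|chi g x| = 1.
Proof.
apply: (norm_unity_root expo_gt0).
by rewrite -exprM mulnC exprM omega_expo expr1n.
Qed.

Lemma chi_gzero (x : G) : chi (gzero d) x = 1.
Proof. by rewrite /chi pairing_gzero. Qed.

Lemma chi_gsub (x y s : G) : chi (gsub x y) s = chi x s * (chi y s)^*.
Proof.
have <- : chi (gsub x y) s * chi y s = chi x s.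
  by rewrite /chi -exprD; apply/omega_eqmod/pairing_gsub.
by rewrite -mulrA -normCK norm_chi expr1n mulr1.
Qed.

Lemma chi_gmul (v s : G) m : chi (gmul v m) s = chi v s ^+ m.
Proof. by rewrite /chi -exprM; apply/omega_eqmod/pairing_gmul. Qed.

End Characters.

Section CharacterSums.
Variables (k : nat) (d : 'I_k -> nat).
Local Notation G := (grp d).

(* If h = m v and v = m' h, then (m m' - 1) v = 0 with m prime to m m' - 1,
   so χ_h = χ_v ^ m is a Galois conjugate of χ_v. *)
Lemma same_dir_chi_conj (v h : G) : same_dir v h ->
  exists u : {rmorphism algC -> algC}, forall x, chi h x = u (chi v x).
Proof.
move=> vh.
have [m hm] : exists m, h = gmul v m by apply/(vh h).2; exists 1%N; rewrite gmul1.
have [m' vm] : exists m', v = gmul h m' by apply/(vh v).1; exists 1%N; rewrite gmul1.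
have [e cop_me ve] : exists2 e, coprime m e & gmul v e = gzero d.
  have : gmul v (m * m') = v by rewrite -gmulA -hm -vm.
  case mm': (m * m')%N => [|e] v_fix.
    by exists 1%N; rewrite ?coprimen1 // -v_fix gmul0 gmul0v.
  exists e; last exact: gmulS_fix.
  by rewrite coprime_sym (coprime_dvdr _ (coprimenS e)) // -mm' dvdn_mulr.
have [u uP] := Qn_aut_exists cop_me.
by exists u => x; rewrite hm chi_gmul uP // -chi_gmul ve chi_gzero.
Qed.

Lemma sum_chi_same_dir (L : {set G}) (v h : G) : same_dir v h ->
  \sum_(l in L) chi v l = 0 -> \sum_(l in L) chi h l = 0.
Proof.
case/same_dir_chi_conj => u uP sum_v0.
by under eq_bigr do rewrite uP; rewrite -rmorph_sum sum_v0 rmorph0.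
Qed.

Lemma spectrum_sum_chi_gsub (S Lam : {set G}) :
  #|Lam| = #|S| ->
  (forall l l', l \in Lam -> l' \in Lam -> l != l' ->
     chi_sum (gsub l l') S = 0) ->
  forall s t, s \in S -> t \in S -> s != t ->
    \sum_(l in Lam) chi (gsub s t) l = 0.
Proof.
move=> cardLS orth s t sS tS st.
rewrite -[RHS](col_orth (a := @chi _ d) cardLS (@norm_chi _ d) _ sS tS st).
  by apply: eq_bigr => l _; rewrite chi_gsub !(chiC l).
move=> l l' lL l'L ll'; rewrite -[RHS](orth l l' lL l'L ll').
by apply: eq_bigr => s' _; rewrite chi_gsub.
Qed.

Lemma sum_chi_subgroup (H : {set G}) (l : G) : subgroup H ->
  \sum_(h in H) chi l h = if [forall h in H, chi l h == 1] then #|H|%:R else 0.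
Proof.
case=> H0 Hsub; case: ifP => [/forall_inP chi1 | ].
  by rewrite (eq_bigr (fun _ => 1)) ?sumr_const // => h /chi1/eqP.
move/negbT; rewrite negb_forall_in => /exists_inP[h0 h0H chi_h0].
have translate : \sum_(h in H) chi l h = (\sum_(h in H) chi l h) * (chi l h0)^*.
  have imH : [set gsub h h0 | h in H] = H.
    apply/eqP; rewrite eqEcard card_in_imset; last by move=> x y _ _ /gsubIr.
    by rewrite leqnn andbT; apply/subsetP => x /imsetP[h hH ->]; exact: Hsub.
  rewrite mulr_suml -{1}imH big_imset /=; last by move=> x y _ _ /gsubIr.
  by apply: eq_bigr => h _; rewrite chiC chi_gsub !(chiC l).
apply/eqP; move: translate => /eqP; rewrite -subr_eq0 -{1}[X in X - _]mulr1.
rewrite -mulrBr mulf_eq0 subr_eq0 => /orP[// | /eqP chi_h0_1].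
by move: chi_h0; rewrite -[chi l h0]conjCK -chi_h0_1 conjC1 eqxx.
Qed.

Lemma subgroup_card_dvdn (H L : {set G}) : subgroup H ->
  (forall h, h \in H -> h != gzero d -> \sum_(l in L) chi h l = 0) ->
  (#|H| %| #|L|)%N.
Proof.
move=> subH vanish; have H0 := subH.1.
have : \sum_(h in H) \sum_(l in L) chi h l = #|L|%:R.
  rewrite (bigD1 (gzero d)) //= [X in _ + X]big1 ?addr0; last first.
    by move=> h /andP[hH h_neq0]; exact: vanish.
  by rewrite (eq_bigr (fun _ => 1)) ?sumr_const // => l _; rewrite chi_gzero.
rewrite exchange_big; under eq_bigr do under eq_bigr do rewrite chiC.
under eq_bigr do rewrite sum_chi_subgroup //.
rewrite -big_mkcondr sumr_const -mulrnA => /eqP; rewrite eqr_nat => /eqP <-.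
exact: dvdn_mulr.
Qed.

End CharacterSums.

Theorem corollary3p2 (k : nat) (d : 'I_k -> nat) (S H : {set grp d}) :
  spectral S ->
  subgroup H ->
  (forall h, h \in H -> h != gzero d ->
     exists2 w, w \in diffset S & same_dir w h) ->
  (#|H| %| #|S|)%N.
Proof.
move=> [Lam [cardLS orth]] subH dirs; rewrite -cardLS.
apply: subgroup_card_dvdn => // h hH h_neq0.
have [_ /imset2P[s t sS tS ->] st_h] := dirs h hH h_neq0.
apply: (sum_chi_same_dir st_h); apply: (spectrum_sum_chi_gsub cardLS orth sS tS).
by apply: contraNneq h_neq0 => st; apply/eqP/same_dir_gzero; rewrite -(gsubxx s) {2}st.
Qed.
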